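(* Let $q\ge 3$ be a prime power and let $P\subseteq[0,q-2]^n$ and $Q\subseteq[0,q-2]^m$ be integral convex polytopes. Then the join $P*Q\subseteq[0,q-2]^{n+m+1}$ satisfies $$N(P*Q)=\max\Big\{(q-1)^{n+m},\ N(P)(q-1)^{m+1},\ N(Q)(q-1)^{n+1},\ (q-1)N(P)N(Q)+\big((q-1)^n-N(P)\big)\big((q-1)^m-N(Q)\big)\Big\},$$ and consequently $$\delta(P*Q)=\min\Big\{1-\tfrac{1}{q-1},\ \delta(P),\ \delta(Q),\ \delta(P)+\delta(Q)-\delta(P)\delta(Q)\tfrac{q}{q-1}\Big\}.$$
   Context: The join of integral convex polytopes $P\subseteq\mathbb{R}^n$ and $Q\subseteq\mathbb{R}^m$ is $P*Q=\mathrm{conv}\big(\{(p,\mathbf{0}^m,0):p\in P\}\cup\{(\mathbf{0}^n,y,1):y\in Q\}\big)\subseteq\mathbb{R}^{n+m+1}$. For an integral convex polytope $P\subseteq[0,q-2]^n$, $\mathcal{L}_P=\mathrm{span}_{\mathbb{F}_q}\{x^p: p\in P\cap\mathbb{Z}^n\}$, $N(P)=\max_{0\neq f\in\mathcal{L}_P}|Z(f)|$ where $Z(f)$ is the set of zeros of $f$ in $(\mathbb{F}_q^\times)^n$, and $\delta(P)=\big((q-1)^n-N(P)\big)/(q-1)^n$ (computed with respect to the ambient dimension of the polytope; e.g. $(q-1)^{n+m+1}$ for $P*Q$). *)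

From HB Require Import structures.
From mathcomp Require Import all_boot all_order all_algebra all_field.
From mathcomp Require Import boolp.
Set Implicit Arguments. Unset Strict Implicit. Unset Printing Implicit Defensive.
Import Order.TTheory GRing.Theory Num.Theory.
Local Open Scope ring_scope.

(* An integral convex polytope in R^n is given by a finite list of integer
   points (its vertices / generators); the polytope is their convex hull. *)
Definition in_conv (n : nat) (V : seq 'rV[int]_n) (x : 'rV[rat]_n) : Prop :=
  exists lam : 'I_(size V) -> rat,
    [/\ forall k, 0 <= lam k, \sum_k lam k = 1 &
        x = \sum_k lam k *: map_mx (fun z : int => z%:~R) (nth 0 V k)].

Definition in_box (q n : nat) (V : seq 'rV[int]_n) : Prop :=
  forall x, in_conv V x -> forall i, 0 <= x ord0 i <= (q - 2)%:R.

Definition join_pts (n m : nat) (VP : seq 'rV[int]_n) (VQ : seq 'rV[int]_m)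
  : seq 'rV[int]_(n + m + 1) :=
  [seq row_mx (row_mx v 0) 0 | v <- VP] ++
  [seq row_mx (row_mx 0 w) (1 : 'rV[int]_1) | w <- VQ].

(* Exponent vectors in [0, q-2]^n, q = #|F|. *)
Definition expo (F : finFieldType) (n : nat) := {ffun 'I_n -> 'I_(#|F|.-1)}.

Definition expo_vec (F : finFieldType) (n : nat) (e : expo F n) : 'rV[rat]_n :=
  \row_i ((e i : nat)%:R).

(* A polynomial with exponents in [0,q-2]^n, given by its coefficients. *)
Definition coefs (F : finFieldType) (n : nat) := {ffun expo F n -> F}.

Definition evalc (F : finFieldType) (n : nat) (c : coefs F n) (t : 'I_n -> F) : F :=
  \sum_(e : expo F n) c e * \prod_(i < n) t i ^+ (e i : nat).

Definition zeros (F : finFieldType) (n : nat) (c : coefs F n) : {set {ffun 'I_n -> F}} :=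
  [set t : {ffun 'I_n -> F} | [forall i, t i != 0] && (evalc c t == 0)].

Definition inL (F : finFieldType) (n : nat) (V : seq 'rV[int]_n) (c : coefs F n) : Prop :=
  forall e, c e != 0 -> in_conv V (expo_vec e).

Definition Nmax (F : finFieldType) (n : nat) (V : seq 'rV[int]_n) : nat :=
  \max_(c : coefs F n | (c != 0) && `[< inL V c >]) #|zeros c|.

Definition delta (F : finFieldType) (n : nat) (V : seq 'rV[int]_n) : rat :=
  (((#|F|.-1) ^ n)%:R - (Nmax F V)%:R) / ((#|F|.-1) ^ n)%:R.

From mathcomp Require Import all_boot all_order all_algebra.
From mathcomp Require Import boolp lra zify ring.
Set Implicit Arguments. Unset Strict Implicit. Unset Printing Implicit Defensive.
Import Order.TTheory GRing.Theory Num.Theory.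
Local Open Scope ring_scope.

(* The apex coordinate of a point of P * Q is the total weight of Q in a
   convex combination, so the exponents of L_{P*Q} have apex coordinate 0 or 1:
   every f in L_{P*Q} is g(x) + z h(y) with g in L_P and h in L_Q, and
   conversely.  For (x, y) in the torus, z |-> g(x) + z h(y) has q - 1 zeros
   in F^x if g(x) = h(y) = 0, one if both are nonzero, and none otherwise, so
     |Z(f)| = (q-1) |Z(g)| |Z(h)| + ((q-1)^n - |Z(g)|) ((q-1)^m - |Z(h)|).
   This bilinear count is maximal when g or h vanishes, when g and h are
   zero-free monomials, or when both attain N(P) and N(Q). *)

Lemma card_pred_gt0 (F : finFieldType) : (0 < #|F|.-1)%N.
Proof. by have := card_finNzRing_gt1 F; case: #|F| => [|[|k]]. Qed.

Definition ordq0 (F : finFieldType) : 'I_(#|F|.-1) := Ordinal (card_pred_gt0 F).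
Definition ordq1 (F : finFieldType) : 'I_(#|F|.-1) := Ordinal (ltn_pmod 1 (card_pred_gt0 F)).

Lemma ordq1E (F : finFieldType) : (1 < #|F|.-1)%N -> (ordq1 F : nat) = 1%N.
Proof. by move=> q_gt2; rewrite /= modn_small. Qed.

Section Torus.
Variables (F : finFieldType) (k : nat).

Definition torus : {set {ffun 'I_k -> F}} := [set t : {ffun 'I_k -> F} | [forall i, t i != 0]].

Lemma card_torus : #|torus| = (#|F|.-1 ^ k)%N.
Proof.
rewrite -(cardC1 (0 : F)) -[k in (_ ^ k)%N]card_ord -card_ffun_on; apply: eq_card => t.
by rewrite inE; apply/forallP/ffun_onP => tP i; have := tP i; rewrite inE.
Qed.

Lemma in_zeros (c : coefs F k) t : (t \in zeros c) = (t \in torus) && (evalc c t == 0).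
Proof. by rewrite !inE. Qed.

Lemma zeros_sub_torus (c : coefs F k) : zeros c \subset torus.
Proof. by apply/subsetP => t; rewrite in_zeros => /andP[]. Qed.

Lemma zeros0 : zeros (0 : coefs F k) = torus.
Proof.
apply/setP => t; rewrite !inE /evalc big1 ?eqxx ?andbT // => e _.
by rewrite ffunE mul0r.
Qed.

Lemma sum_torus_zeros (c : coefs F k) :
  (\sum_(t in torus) (evalc c t == 0%R) = #|zeros c|)%N.
Proof.
rewrite -sum1_card big_mkcond [RHS]big_mkcond; apply: eq_bigr => t _.
by rewrite !inE; case: [forall i, _]; case: (_ == _).
Qed.

Lemma sum_torus_nonzeros (c : coefs F k) :
  (\sum_(t in torus) (evalc c t != 0%R) = #|torus| - #|zeros c|)%N.
Proof.
rewrite -sum_torus_zeros -sum1_card.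
have -> : (\sum_(t in torus) 1 = \sum_(t in torus) (evalc c t == 0%R)
                                + \sum_(t in torus) (evalc c t != 0%R))%N.
  by rewrite -big_split; apply: eq_bigr => t _; case: (_ == _).
by rewrite addKn.
Qed.

End Torus.

Lemma in_conv_rowP k (V : seq 'rV[int]_k) x : in_conv V x <->
  exists lam : 'I_(size V) -> rat, [/\ forall j, 0 <= lam j, \sum_j lam j = 1 &
    forall a, x 0 a = \sum_j lam j * ((nth 0 V j) 0 a)%:~R].
Proof.
split=> -[lam [lam_ge0 lam_sum1 xE]]; exists lam; split => //.
  by move=> a; rewrite xE summxE; apply: eq_bigr => j _; rewrite !mxE.
by apply/rowP => a; rewrite xE summxE; apply: eq_bigr => j _; rewrite !mxE.
Qed.

Lemma nth_in_conv k (V : seq 'rV[int]_k) (j : 'I_(size V)) :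
  in_conv V (\row_a ((nth 0 V j) 0 a)%:~R).
Proof.
apply/in_conv_rowP; exists (fun i => (i == j)%:R).
have dirac (f : 'I_(size V) -> rat) : \sum_i (i == j)%:R * f i = f j.
  by rewrite (bigD1 j) //= eqxx mul1r big1 ?addr0 // => i /negPf ->; rewrite mul0r.
split=> [i||a]; first exact: ler0n.
  by have := dirac (fun=> 1); under eq_bigr do rewrite mulr1.
by rewrite mxE dirac.
Qed.

Section Nmax.
Variables (F : finFieldType) (k : nat) (V : seq 'rV[int]_k).

Lemma inL0 : inL V (0 : coefs F k).
Proof. by move=> e; rewrite ffunE eqxx. Qed.

Lemma card_zeros_le_Nmax (c : coefs F k) : c != 0 -> inL V c -> (#|zeros c| <= Nmax F V)%N.
Proof. by move=> c_neq0 cV; apply: leq_bigmax_cond; rewrite c_neq0; apply/asboolP. Qed.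

Lemma Nmax_le N : (forall c : coefs F k, c != 0 -> inL V c -> (#|zeros c| <= N)%N) ->
  (Nmax F V <= N)%N.
Proof. by move=> cN; apply/bigmax_leqP => c /andP[c_neq0 /asboolP]; apply: cN. Qed.

Lemma Nmax_le_expn : (Nmax F V <= #|F|.-1 ^ k)%N.
Proof.
by rewrite -card_torus; apply: Nmax_le => c _ _; apply/subset_leq_card/zeros_sub_torus.
Qed.

Lemma in_box_expo_vec (v : 'rV[int]_k) : in_box #|F| V -> in_conv V (\row_a (v 0 a)%:~R) ->
  exists e : expo F k, expo_vec e = \row_a (v 0 a)%:~R.
Proof.
move=> V_box vV.
exists [ffun a => Ordinal (ltn_pmod (absz (v 0 a)) (card_pred_gt0 F))].
apply/rowP => a; rewrite !mxE ffunE /=.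
have := V_box _ vV a; rewrite mxE.
case: (v 0 a) => p /andP[p_ge0 p_le]; last by move: p_ge0; rewrite ler0z.
rewrite /= modn_small ?pmulrn //.
move: p_le; rewrite -pmulrn ler_nat => p_le.
by have := card_pred_gt0 F; move: p_le; case: #|F| => [|[|r]] //=; lia.
Qed.

Definition monomial (e : expo F k) : coefs F k := [ffun e' => (e' == e)%:R].

Lemma monomial_neq0 e : monomial e != 0.
Proof. by apply/eqP => /ffunP /(_ e); rewrite !ffunE eqxx => /eqP; rewrite oner_eq0. Qed.

Lemma inL_monomial e : in_conv V (expo_vec e) -> inL V (monomial e).
Proof. by move=> eV e'; rewrite ffunE; case: (eqVneq e' e) => [-> //|_]; rewrite eqxx. Qed.

Lemma zeros_monomial e : zeros (monomial e) = set0.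
Proof.
apply/setP => t; rewrite in_zeros !inE; apply/negbTE; rewrite negb_and.
case: forallP => //= t_neq0.
rewrite /evalc (bigD1 e) //= [X in _ + X]big1 => [|e' /negPf e'_neq]; last first.
  by rewrite ffunE e'_neq mul0r.
rewrite ffunE eqxx mul1r addr0; apply/prodf_neq0 => a _.
by rewrite expf_neq0 // t_neq0.
Qed.

Lemma inL_zero_free : V != [::] -> in_box #|F| V ->
  exists c : coefs F k, [/\ c != 0, inL V c & #|zeros c| = 0%N].
Proof.
move=> V_neq0 V_box; have V_gt0 : (0 < size V)%N by rewrite lt0n size_eq0.
have vV := nth_in_conv (Ordinal V_gt0).
have [e eE] := in_box_expo_vec V_box vV.
exists (monomial e); split; first exact: monomial_neq0.
  by apply: inL_monomial; rewrite eE.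
by rewrite zeros_monomial cards0.
Qed.

Lemma Nmax_attained : V != [::] -> in_box #|F| V ->
  exists c : coefs F k, [/\ c != 0, inL V c & #|zeros c| = Nmax F V].
Proof.
move=> V_neq0 V_box; have [c0 [c0_neq0 c0V _]] := inL_zero_free V_neq0 V_box.
have c0P : (c0 != 0) && `[< inL V c0 >] by rewrite c0_neq0; apply/asboolP.
have [c /andP[c_neq0 /asboolP cV] cmax] :=
  @arg_maxnP _ c0 (fun c => (c != 0) && `[< inL V c >]) (fun c => #|zeros c|) c0P.
exists c; split => //; apply/eqP; rewrite eqn_leq card_zeros_le_Nmax //=.
by apply: Nmax_le => d d_neq0 dV; apply: cmax; rewrite d_neq0; apply/asboolP.
Qed.

End Nmax.

Definition affine_zeros (F : finFieldType) (a b : F) :=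
  [set z : F | (z != 0) && (a + z * b == 0)].

Lemma card_affine_zeros (F : finFieldType) (a b : F) :
  #|affine_zeros a b| =
  (#|F|.-1 * (a == 0%R) * (b == 0%R) + (a != 0%R) * (b != 0%R))%N.
Proof.
have [->|b_neq0] := eqVneq b 0.
  rewrite muln1 muln0 addn0; have [->|a_neq0] := eqVneq a 0.
    rewrite muln1 -(cardC1 (0 : F)); apply: eq_card => z.
    by rewrite !inE mulr0 addr0 eqxx andbT.
  rewrite muln0; apply/eqP; rewrite cards_eq0; apply/eqP/setP => z.
  by rewrite !inE mulr0 addr0 (negPf a_neq0) andbF.
rewrite muln0 add0n muln1.
have -> : affine_zeros a b = [set z | (a != 0) && (z == - a / b)].
  apply/setP => z; rewrite !inE.
  have -> : (a + z * b == 0) = (z == - a / b).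
    apply/eqP/eqP => [/eqP|->]; last by rewrite divfK // addrN.
    by rewrite addr_eq0 => /eqP ->; rewrite opprK mulfK.
  have [->|] := eqVneq z (- a / b); last by rewrite !andbF.
  by rewrite !andbT mulf_eq0 invr_eq0 oppr_eq0 (negPf b_neq0) orbF.
case: (a != 0); last by apply/eqP; rewrite cards_eq0; apply/eqP/setP => z; rewrite !inE.
by rewrite /= -(cards1 (- a / b)); apply: eq_card => z; rewrite !inE.
Qed.

Definition join_zeros_count (r a b u v : nat) := (r * u * v + (a - u) * (b - v))%N.

Section Join.
Variables (n m : nat).

Local Notation iP a := (@lshift (n + m) 1 (@lshift n m a)).
Local Notation iQ b := (@lshift (n + m) 1 (@rshift n m b)).
Local Notation iz := (@rshift (n + m) 1 ord0).

Lemma join_ord_ind (P : 'I_(n + m + 1) -> Prop) :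
  (forall a, P (iP a)) -> (forall b, P (iQ b)) -> P iz -> forall i, P i.
Proof.
move=> PP PQ Pz i; case: (split_ordP i) => [j ->|k ->]; last by rewrite (ord1 k).
by case: (split_ordP j) => [a ->|b ->].
Qed.

Lemma prod_join_ord (R : comNzRingType) (f : 'I_(n + m + 1) -> R) :
  \prod_i f i = (\prod_a f (iP a)) * (\prod_b f (iQ b)) * f iz.
Proof. by rewrite big_split_ord big_split_ord big_ord1. Qed.

Section JoinFun.
Variable T : Type.

Definition join_fun (x : 'I_n -> T) (y : 'I_m -> T) (z : T) : {ffun 'I_(n + m + 1) -> T} :=
  [ffun i => match split i with
             | inl j => match split j with inl a => x a | inr b => y b end
             | inr _ => z end].

Definition restrP (t : 'I_(n + m + 1) -> T) : {ffun 'I_n -> T} := [ffun a => t (iP a)].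
Definition restrQ (t : 'I_(n + m + 1) -> T) : {ffun 'I_m -> T} := [ffun b => t (iQ b)].

Lemma join_funP x y z a : join_fun x y z (iP a) = x a.
Proof. by rewrite ffunE !(unsplitK (inl _ _)). Qed.

Lemma join_funQ x y z b : join_fun x y z (iQ b) = y b.
Proof. by rewrite ffunE (unsplitK (inl _ _)) (unsplitK (inr _ _)). Qed.

Lemma join_fun_apex x y z : join_fun x y z iz = z.
Proof. by rewrite ffunE (unsplitK (inr _ _)). Qed.

Lemma restrP_join (x : {ffun 'I_n -> T}) y z : restrP (join_fun x y z) = x.
Proof. by apply/ffunP => a; rewrite ffunE join_funP. Qed.

Lemma restrQ_join x (y : {ffun 'I_m -> T}) z : restrQ (join_fun x y z) = y.
Proof. by apply/ffunP => b; rewrite ffunE join_funQ. Qed.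

Lemma join_funK (t : {ffun 'I_(n + m + 1) -> T}) :
  join_fun (restrP t) (restrQ t) (t iz) = t.
Proof.
apply/ffunP; apply: join_ord_ind => [a|b|];
  by rewrite ?join_funP ?join_funQ ?join_fun_apex ?ffunE.
Qed.

Lemma join_fun_bij :
  bijective (fun p : {ffun 'I_n -> T} * {ffun 'I_m -> T} * T => join_fun p.1.1 p.1.2 p.2).
Proof.
exists (fun t : {ffun _ -> T} => (restrP t, restrQ t, t iz)) => [[[x y] z]|t] /=;
  by rewrite ?restrP_join ?restrQ_join ?join_fun_apex ?join_funK.
Qed.

End JoinFun.

Arguments restrP {T} t.
Arguments restrQ {T} t.

Section JoinPolytope.
Variables (VP : seq 'rV[int]_n) (VQ : seq 'rV[int]_m).
Local Notation J := (join_pts VP VQ).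

Lemma size_join_pts : size J = (size VP + size VQ)%N.
Proof. by rewrite size_cat !size_map. Qed.

Local Notation jP j := (cast_ord (esym size_join_pts) (lshift (size VQ) j)).
Local Notation jQ j := (cast_ord (esym size_join_pts) (rshift (size VP) j)).

Lemma nth_join_ptsP (j : 'I_(size VP)) : nth 0 J (jP j) = row_mx (row_mx (nth 0 VP j) 0) 0.
Proof. by rewrite /= nth_cat size_map ltn_ord (nth_map 0). Qed.

Lemma nth_join_ptsQ (j : 'I_(size VQ)) : nth 0 J (jQ j) = row_mx (row_mx 0 (nth 0 VQ j)) 1.
Proof. by rewrite nth_cat size_map /= ltnNge leq_addr /= addKn (nth_map 0). Qed.

Lemma sum_join_pts (f : 'I_(size J) -> rat) :
  \sum_k f k = \sum_(j < size VP) f (jP j) + \sum_(j < size VQ) f (jQ j).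
Proof.
rewrite (reindex (cast_ord (esym size_join_pts))) /= ?big_split_ord //.
by apply: onW_bij; exists (cast_ord size_join_pts); [exact: cast_ordKV | exact: cast_ordK].
Qed.

Lemma in_conv_joinP x : in_conv J x <->
  exists (al : 'I_(size VP) -> rat) (be : 'I_(size VQ) -> rat),
  [/\ (forall j, 0 <= al j) /\ (forall j, 0 <= be j),
      \sum_j al j + \sum_j be j = 1,
      forall a, x 0 (iP a) = \sum_j al j * ((nth 0 VP j) 0 a)%:~R,
      forall b, x 0 (iQ b) = \sum_j be j * ((nth 0 VQ j) 0 b)%:~R &
      x 0 iz = \sum_j be j].
Proof.
split.
  move=> /in_conv_rowP [lam [lam_ge0 lam_sum1 xE]].
  exists (fun j => lam (jP j)), (fun j => lam (jQ j)); split.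
  - by split => j; apply: lam_ge0.
  - by rewrite -lam_sum1 sum_join_pts.
  - move=> a; rewrite xE sum_join_pts [X in _ + X]big1 ?addr0.
      by apply: eq_bigr => j _; rewrite nth_join_ptsP !row_mxEl.
    by move=> j _; rewrite nth_join_ptsQ !row_mxEl mxE mulr0.
  - move=> b; rewrite xE sum_join_pts big1 ?add0r.
      by apply: eq_bigr => j _; rewrite nth_join_ptsQ row_mxEl row_mxEr.
    by move=> j _; rewrite nth_join_ptsP row_mxEl row_mxEr mxE mulr0.
  - rewrite xE sum_join_pts big1 ?add0r.
      by apply: eq_bigr => j _; rewrite nth_join_ptsQ row_mxEr mxE mulr1.
    by move=> j _; rewrite nth_join_ptsP row_mxEr mxE mulr0.
move=> [al [be [[al_ge0 be_ge0] sum1 xP xQ xz]]]; apply/in_conv_rowP.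
pose lam k := match split (cast_ord size_join_pts k) with inl j => al j | inr j => be j end.
have lamP j : lam (jP j) = al j by rewrite /lam cast_ordKV (unsplitK (inl _ _)).
have lamQ j : lam (jQ j) = be j by rewrite /lam cast_ordKV (unsplitK (inr _ _)).
exists lam; split.
- by move=> k; rewrite /lam; case: split => j.
- rewrite sum_join_pts -sum1; under eq_bigr do rewrite lamP.
  by under [X in _ + X]eq_bigr do rewrite lamQ.
- apply: join_ord_ind => [a|b|]; rewrite sum_join_pts.
  + rewrite xP [X in _ + X]big1 ?addr0.
      by apply: eq_bigr => j _; rewrite lamP nth_join_ptsP !row_mxEl.
    by move=> j _; rewrite nth_join_ptsQ !row_mxEl mxE mulr0.
  + rewrite xQ [X in _ = X + _]big1 ?add0r.
      by apply: eq_bigr => j _; rewrite lamQ nth_join_ptsQ row_mxEl row_mxEr.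
    by move=> j _; rewrite nth_join_ptsP row_mxEl row_mxEr mxE mulr0.
  + rewrite xz [X in _ = X + _]big1 ?add0r.
      by apply: eq_bigr => j _; rewrite lamQ nth_join_ptsQ row_mxEr mxE mulr1.
    by move=> j _; rewrite nth_join_ptsP row_mxEr mxE mulr0.
Qed.

End JoinPolytope.

Section Faces.
Variables (F : finFieldType) (VP : seq 'rV[int]_n) (VQ : seq 'rV[int]_m).
Hypothesis q_gt2 : (1 < #|F|.-1)%N.
Local Notation J := (join_pts VP VQ).

Definition liftP (e : expo F n) : expo F (n + m + 1) := join_fun e (fun=> ordq0 F) (ordq0 F).
Definition liftQ (e : expo F m) : expo F (n + m + 1) := join_fun (fun=> ordq0 F) e (ordq1 F).

Definition onP (e : expo F (n + m + 1)) := liftP (restrP e) == e.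
Definition onQ (e : expo F (n + m + 1)) := liftQ (restrQ e) == e.

Lemma onP_liftP e : onP (liftP e).
Proof. by rewrite /onP restrP_join. Qed.

Lemma onQ_liftQ e : onQ (liftQ e).
Proof. by rewrite /onQ restrQ_join. Qed.

Lemma onQ_onPF e : onQ e -> onP e = false.
Proof.
move=> /eqP eQ; apply/negbTE/eqP => eP.
have := congr1 (fun e : expo F _ => (e iz : nat)) (etrans eP (esym eQ)).
by rewrite /= !join_fun_apex ordq1E.
Qed.

Lemma expo_join_faces (e : expo F (n + m + 1)) : in_conv J (expo_vec e) -> onP e || onQ e.
Proof.
move=> /in_conv_joinP [al [be [[al_ge0 be_ge0] sum1 eP eQ ez]]].
rewrite mxE in ez.
have [sal_ge0 sbe_ge0] : 0 <= \sum_j al j /\ 0 <= \sum_j be j by split; apply: sumr_ge0.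
have : (e iz <= 1)%N by rewrite -(ler_nat rat) ez; lra.
rewrite leq_eqVlt ltnS leqn0 => /orP[] /eqP ezE; rewrite ezE in ez; apply/orP.
  right; apply/eqP/ffunP; apply: join_ord_ind => [a|b|].
  - apply: val_inj; rewrite join_funP /=; apply/esym/eqP; move: (eP a).
    have sal0 : \sum_j al j = 0 by lra.
    have al0 := psumr_eq0P (fun j _ => al_ge0 j) sal0.
    by rewrite mxE big1 => [/eqP|j _]; rewrite ?pnatr_eq0 // al0 ?mul0r.
  - by rewrite join_funQ ffunE.
  - by apply: val_inj; rewrite join_fun_apex /= ezE modn_small.
left; apply/eqP/ffunP; apply: join_ord_ind => [a|b|].
- by rewrite join_funP ffunE.
- apply: val_inj; rewrite join_funQ /=; apply/esym/eqP; move: (eQ b).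
  have be0 := psumr_eq0P (fun j _ => be_ge0 j) (esym ez).
  by rewrite mxE big1 => [/eqP|j _]; rewrite ?pnatr_eq0 // be0 ?mul0r.
- by apply: val_inj; rewrite join_fun_apex /= ezE.
Qed.

Definition coefP (c : coefs F (n + m + 1)) : coefs F n := [ffun e => c (liftP e)].
Definition coefQ (c : coefs F (n + m + 1)) : coefs F m := [ffun e => c (liftQ e)].

Definition join_coefs (g : coefs F n) (h : coefs F m) : coefs F (n + m + 1) :=
  [ffun e => if onP e then g (restrP e) else if onQ e then h (restrQ e) else 0].

Lemma coefP_join g h : coefP (join_coefs g h) = g.
Proof. by apply/ffunP => e; rewrite !ffunE onP_liftP restrP_join. Qed.

Lemma coefQ_join g h : coefQ (join_coefs g h) = h.
Proof. by apply/ffunP => e; rewrite !ffunE onQ_onPF onQ_liftQ ?restrQ_join. Qed.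

Lemma join_coefs_eq0 g h : (join_coefs g h == 0) = (g == 0) && (h == 0).
Proof.
apply/idP/andP => [/eqP gh0|[/eqP-> /eqP->]].
  split; apply/eqP; [rewrite -(coefP_join g h) | rewrite -(coefQ_join g h)];
    by rewrite gh0; apply/ffunP => e; rewrite !ffunE.
by apply/eqP/ffunP => e; rewrite !ffunE; case: ifP => _; last case: ifP.
Qed.

Lemma join_coefsK c : inL J c -> join_coefs (coefP c) (coefQ c) = c.
Proof.
move=> cJ; apply/ffunP => e; rewrite !ffunE.
case: ifP => [/eqP-> //|eP]; case: ifP => [/eqP-> //|eQ].
by have [->//|/cJ/expo_join_faces] := eqVneq (c e) 0; rewrite eP eQ.
Qed.

Lemma monomial_liftP (t : 'I_(n + m + 1) -> F) e :
  \prod_i t i ^+ liftP e i = \prod_a restrP t a ^+ e a.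
Proof.
rewrite prod_join_ord /liftP join_fun_apex expr0 mulr1 [X in _ * X]big1 => [|b _]; last first.
  by rewrite join_funQ expr0.
by rewrite mulr1; apply: eq_bigr => a _; rewrite join_funP ffunE.
Qed.

Lemma monomial_liftQ (t : 'I_(n + m + 1) -> F) e :
  \prod_i t i ^+ liftQ e i = t iz * \prod_b restrQ t b ^+ e b.
Proof.
rewrite prod_join_ord /liftQ join_fun_apex ordq1E // expr1.
rewrite [X in X * _ * _]big1 => [|a _]; last first.
  by rewrite join_funP expr0.
by rewrite mul1r mulrC; congr (_ * _); apply: eq_bigr => b _; rewrite join_funQ ffunE.
Qed.

Lemma evalc_join_coefs g h (t : {ffun 'I_(n + m + 1) -> F}) :
  evalc (join_coefs g h) t = evalc g (restrP t) + t iz * evalc h (restrQ t).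
Proof.
rewrite /evalc (bigID onP) /= [X in _ + X](bigID onQ) /= [X in _ + (_ + X)]big1; last first.
  by move=> e /andP[/negPf eP /negPf eQ]; rewrite ffunE eP eQ mul0r.
rewrite addr0 mulr_sumr; congr (_ + _).
  rewrite (reindex_onto liftP restrP) => [|e /eqP //]; apply: eq_big => e.
    by rewrite onP_liftP restrP_join eqxx.
  by move=> _; rewrite ffunE onP_liftP restrP_join monomial_liftP.
rewrite (reindex_onto liftQ restrQ) => [|e /andP[_ /eqP] //]; apply: eq_big => e.
  by rewrite onQ_onPF onQ_liftQ ?restrQ_join ?eqxx.
by move=> _; rewrite ffunE onQ_onPF onQ_liftQ ?restrQ_join // monomial_liftQ mulrCA.
Qed.

Lemma in_conv_liftP e : in_conv J (expo_vec (liftP e)) <-> in_conv VP (expo_vec e).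
Proof.
split=> [/in_conv_joinP [al [be [[al_ge0 be_ge0] sum1 eP _ ez]]]|
         /in_conv_rowP [lam [lam_ge0 lam_sum1 eE]]].
  rewrite mxE join_fun_apex /= in ez.
  apply/in_conv_rowP; exists al; split=> // [|a]; first by rewrite -ez addr0 in sum1.
  by rewrite -eP !mxE join_funP.
apply/in_conv_joinP; exists lam, (fun=> 0); split=> [|||b|].
- by split=> // j.
- by rewrite big1_eq addr0.
- by move=> a; rewrite mxE join_funP -eE mxE.
- by rewrite mxE join_funQ big1 // => j _; rewrite mul0r.
- by rewrite mxE join_fun_apex big1.
Qed.

Lemma in_conv_liftQ e : in_conv J (expo_vec (liftQ e)) <-> in_conv VQ (expo_vec e).
Proof.
split=> [/in_conv_joinP [al [be [[al_ge0 be_ge0] sum1 _ eQ ez]]]|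
         /in_conv_rowP [lam [lam_ge0 lam_sum1 eE]]].
  rewrite mxE join_fun_apex ordq1E // in ez.
  apply/in_conv_rowP; exists be; split=> // b.
  by rewrite -eQ !mxE join_funQ.
apply/in_conv_joinP; exists (fun=> 0), lam; split=> [||a||].
- by split=> // j.
- by rewrite big1_eq add0r.
- by rewrite mxE join_funP big1 // => j _; rewrite mul0r.
- by move=> b; rewrite mxE join_funQ -eE mxE.
- by rewrite mxE join_fun_apex ordq1E.
Qed.

Lemma inL_join_coefs g h : inL J (join_coefs g h) <-> inL VP g /\ inL VQ h.
Proof.
split=> [ghJ|[gP hQ] e].
  split=> e ge_neq0; [apply/in_conv_liftP | apply/in_conv_liftQ]; apply: ghJ.
    by rewrite ffunE onP_liftP restrP_join.
  by rewrite ffunE onQ_onPF onQ_liftQ ?restrQ_join.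
rewrite ffunE; case: ifP => [/eqP eE /gP|_].
  by rewrite -[e in in_conv J (expo_vec e)]eE => /in_conv_liftP.
case: ifP => [/eqP eE /hQ|_]; last by rewrite eqxx.
by rewrite -[e in in_conv J (expo_vec e)]eE => /in_conv_liftQ.
Qed.

Lemma join_fun_torus (x : {ffun 'I_n -> F}) (y : {ffun 'I_m -> F}) z :
  (join_fun x y z \in torus F (n + m + 1)) = [&& x \in torus F n, y \in torus F m & z != 0].
Proof.
rewrite !inE; apply/forallP/and3P => [t_neq0|[/forallP x_neq0 /forallP y_neq0 z_neq0]].
  split; [apply/forallP => a; have := t_neq0 (iP a) | apply/forallP => b; have := t_neq0 (iQ b)
         | have := t_neq0 iz]; by rewrite ?join_funP ?join_funQ ?join_fun_apex.
by apply: join_ord_ind => [a|b|]; rewrite ?join_funP ?join_funQ ?join_fun_apex.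
Qed.

Lemma card_zeros_join_coefs_sum g h : #|zeros (join_coefs g h)| =
  (\sum_(x in torus F n) \sum_(y in torus F m) #|affine_zeros (evalc g x) (evalc h y)|)%N.
Proof.
pose inZ (x : {ffun 'I_n -> F}) (y : {ffun 'I_m -> F}) z :=
  ((join_fun x y z \in zeros (join_coefs g h)) : nat).
rewrite -sum1_card big_mkcond /= (reindex _ (onW_bij _ (join_fun_bij F))) /=.
rewrite -(pair_bigA _ (fun (xy : {ffun 'I_n -> F} * {ffun 'I_m -> F}) z => inZ xy.1 xy.2 z)).
rewrite -(pair_bigA _ (fun x y => \sum_z inZ x y z)).
have inZE x y z : inZ x y z =
    [&& x \in torus F n, y \in torus F m & z \in affine_zeros (evalc g x) (evalc h y)] :> nat.
  by rewrite /inZ in_zeros join_fun_torus evalc_join_coefs restrP_join restrQ_join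
             join_fun_apex !inE -!andbA.
rewrite [RHS]big_mkcond; apply: eq_bigr => x _.
have [xT|xT] := boolP (x \in torus F n); last first.
  by rewrite big1 // => y _; rewrite big1 // => z _; rewrite inZE (negPf xT).
rewrite [RHS]big_mkcond; apply: eq_bigr => y _.
have [yT|yT] := boolP (y \in torus F m); last first.
  by rewrite big1 // => z _; rewrite inZE (negPf yT) andbF.
by rewrite -sum1_card [RHS]big_mkcond; apply: eq_bigr => z _; rewrite inZE xT yT.
Qed.

Lemma card_zeros_join_coefs g h : #|zeros (join_coefs g h)| =
  join_zeros_count #|F|.-1 #|torus F n| #|torus F m| #|zeros g| #|zeros h|.
Proof.
rewrite card_zeros_join_coefs_sum.
under eq_bigr => x _ do under eq_bigr => y _ do rewrite card_affine_zeros.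
under eq_bigr => x _ do rewrite big_split /= -!big_distrr /=.
by rewrite big_split /= -!big_distrl -big_distrr /= !sum_torus_zeros !sum_torus_nonzeros.
Qed.

End Faces.
End Join.

(* The count is bilinear in (u, v), so on the box [0, U] x [0, V] it is
   maximal at a corner; the corners other than (0, 0) and (U, V) are
   dominated by (0, 0). *)
Lemma join_zeros_count_le (r a b u v U V : nat) :
  (u <= U <= a)%N -> (v <= V <= b)%N ->
  (join_zeros_count r a b u v <= maxn (a * b) (join_zeros_count r a b U V))%N.
Proof.
rewrite /join_zeros_count leq_max => /andP[uU Ua] /andP[vV Vb].
have [a1 ->] : exists a1, a = (U + a1)%N by exists (a - U)%N; rewrite subnKC.
have [u1 ->] : exists u1, U = (u + u1)%N by exists (U - u)%N; rewrite subnKC.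
have [b1 ->] : exists b1, b = (V + b1)%N by exists (b - V)%N; rewrite subnKC.
have [v1 ->] : exists v1, V = (v + v1)%N by exists (V - v)%N; rewrite subnKC.
have -> : (u + u1 + a1 - u = u1 + a1)%N by lia.
have -> : (u + u1 + a1 - (u + u1) = a1)%N by lia.
have -> : (v + v1 + b1 - v = v1 + b1)%N by lia.
have -> : (v + v1 + b1 - (v + v1) = b1)%N by lia.
have [rv_le|rv_gt] := leqP (r * v) (v1 + b1).
  by apply/orP; left; have := leq_mul (leqnn u) rv_le; nia.
have [ru_le|ru_gt] := leqP (r * (u + u1)) a1.
  apply/orP; left; have := leq_mul (leqnn v) ru_le.
  by have := leq_mul (leqnn u1) (ltnW rv_gt); nia.
apply/orP; right; have := leq_mul (leqnn v1) (ltnW ru_gt).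
by have := leq_mul (leqnn u1) (ltnW rv_gt); nia.
Qed.

Lemma divr_subr_maxn (R : realFieldType) (D : R) (x y : nat) : 0 < D ->
  (D - (maxn x y)%:R) / D = Num.min ((D - x%:R) / D) ((D - y%:R) / D).
Proof.
move=> D_gt0; have anti (u v : nat) : (u <= v)%N -> (D - v%:R) / D <= (D - u%:R) / D.
  by move=> uv; rewrite ler_pM2r ?invr_gt0 // lerD2l lerN2 ler_nat.
by have [xy|/ltnW yx] := leqP x y; [rewrite min_r ?anti | rewrite min_l ?anti].
Qed.

Section JoinTheorem.
Variables (F : finFieldType) (n m : nat) (VP : seq 'rV[int]_n) (VQ : seq 'rV[int]_m).
Hypotheses (q_gt2 : (1 < #|F|.-1)%N) (VP_neq0 : VP != [::]) (VQ_neq0 : VQ != [::])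
           (VP_box : in_box #|F| VP) (VQ_box : in_box #|F| VQ).
Local Notation r := #|F|.-1.
Local Notation NP := (Nmax F VP).
Local Notation NQ := (Nmax F VQ).
Local Notation J := (join_pts VP VQ).

Lemma Nmax_join_le : (Nmax F J <=
  maxn (maxn (r ^ (n + m)) (NP * r ^ m.+1))
       (maxn (NQ * r ^ n.+1) (join_zeros_count r (r ^ n) (r ^ m) NP NQ)))%N.
Proof.
apply: Nmax_le => c c_neq0 cJ; have cE := join_coefsK q_gt2 cJ.
move: c_neq0 cJ; rewrite -cE (join_coefs_eq0 q_gt2) negb_and (inL_join_coefs _ _ q_gt2).
move: (coefP c) (coefQ c) => g h gh_neq0 [gP hQ].
have NP_le := Nmax_le_expn F VP; have NQ_le := Nmax_le_expn F VQ.
rewrite (card_zeros_join_coefs q_gt2) !card_torus.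
have [g0|g_neq0] := eqVneq g 0.
  rewrite g0 eqxx /= in gh_neq0 *.
  have := card_zeros_le_Nmax gh_neq0 hQ.
  rewrite zeros0 card_torus /join_zeros_count subnn mul0n addn0 => hN.
  apply: (leq_trans _ (leq_maxr _ _)); apply: (leq_trans _ (leq_maxl _ _)).
  by rewrite expnS mulnC leq_mul2r hN orbT.
have [h0|h_neq0] := eqVneq h 0.
  have := card_zeros_le_Nmax g_neq0 gP.
  rewrite h0 zeros0 card_torus /join_zeros_count subnn muln0 addn0 => gN.
  apply: (leq_trans _ (leq_maxl _ _)); apply: (leq_trans _ (leq_maxr _ _)).
  by rewrite expnS mulnAC mulnC leq_mul2r gN orbT.
have gN := card_zeros_le_Nmax g_neq0 gP; have hN := card_zeros_le_Nmax h_neq0 hQ.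
have gNP : (#|zeros g| <= NP <= r ^ n)%N by rewrite gN.
have hNQ : (#|zeros h| <= NQ <= r ^ m)%N by rewrite hN.
apply: leq_trans (join_zeros_count_le r gNP hNQ) _.
by rewrite geq_max -expnD !leq_max !leqnn !orbT.
Qed.

Lemma Nmax_join_ge : (maxn (maxn (r ^ (n + m)) (NP * r ^ m.+1))
       (maxn (NQ * r ^ n.+1) (join_zeros_count r (r ^ n) (r ^ m) NP NQ)) <= Nmax F J)%N.
Proof.
have join_le (g : coefs F n) (h : coefs F m) : (g != 0) || (h != 0) -> inL VP g -> inL VQ h ->
    (join_zeros_count r (r ^ n) (r ^ m) #|zeros g| #|zeros h| <= Nmax F J)%N.
  move=> gh_neq0 gP hQ; rewrite -!card_torus -(card_zeros_join_coefs q_gt2 g h).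
  apply: card_zeros_le_Nmax; first by rewrite (join_coefs_eq0 q_gt2) negb_and.
  exact/(inL_join_coefs _ _ q_gt2).
have [gN [gN_neq0 gNP gNE]] := Nmax_attained VP_neq0 VP_box.
have [hN [hN_neq0 hNQ hNE]] := Nmax_attained VQ_neq0 VQ_box.
have [g1 [g1_neq0 g1P g1E]] := inL_zero_free VP_neq0 VP_box.
have [h1 [h1_neq0 h1Q h1E]] := inL_zero_free VQ_neq0 VQ_box.
rewrite !geq_max -!andbA; apply/and4P; split.
- have := join_le g1 h1 _ g1P h1Q; rewrite g1_neq0 g1E h1E.
  by rewrite /join_zeros_count !muln0 !subn0 expnD; apply.
- have := join_le gN 0 _ gNP (inL0 _); rewrite gN_neq0 zeros0 card_torus gNE.
  by rewrite /join_zeros_count subnn muln0 addn0 expnS mulnCA mulnA; apply.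
- have := join_le 0 hN _ (inL0 _) hNQ; rewrite hN_neq0 orbT zeros0 card_torus hNE.
  by rewrite /join_zeros_count subnn mul0n addn0 expnS [(NQ * _)%N]mulnC; apply.
- by have := join_le gN hN _ gNP hNQ; rewrite gN_neq0 gNE hNE; apply.
Qed.

Lemma Nmax_join : Nmax F J =
  maxn (maxn (r ^ (n + m)) (NP * r ^ m.+1))
       (maxn (NQ * r ^ n.+1) (join_zeros_count r (r ^ n) (r ^ m) NP NQ)).
Proof. by apply/eqP; rewrite eqn_leq Nmax_join_le Nmax_join_ge. Qed.

Lemma delta_join : delta F J =
  Num.min (Num.min (1 - 1 / r%:R) (delta F VP))
          (Num.min (delta F VQ) (delta F VP + delta F VQ -
                                 delta F VP * delta F VQ * (#|F|%:R / r%:R))).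
Proof.
have r_neq0 : (r%:R : rat) != 0 by rewrite pnatr_eq0 -lt0n card_pred_gt0.
have D_gt0 : 0 < ((r ^ (n + m + 1))%:R : rat) by rewrite ltr0n expn_gt0 card_pred_gt0.
have qE : (#|F|%:R : rat) = r%:R + 1 by rewrite natr1 prednK // ltnW // card_finNzRing_gt1.
have NP_le := Nmax_le_expn F VP; have NQ_le := Nmax_le_expn F VQ.
rewrite /delta Nmax_join !divr_subr_maxn // /join_zeros_count.
rewrite !natrD !natrM !natrB // qE !natrX !exprD !exprS expr0 mulr1.
have rn_neq0 : (r%:R : rat) ^+ n != 0 by rewrite expf_neq0.
have rm_neq0 : (r%:R : rat) ^+ m != 0 by rewrite expf_neq0.
by congr (Num.min (Num.min _ _) (Num.min _ _)); field; rewrite ?rn_neq0 ?rm_neq0 ?r_neq0.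
Qed.

End JoinTheorem.

Theorem mainTheorem4 (F : finFieldType) (n m : nat)
  (VP : seq 'rV[int]_n) (VQ : seq 'rV[int]_m) :
  (3 <= #|F|)%N ->
  VP != [::] -> VQ != [::] ->
  in_box #|F| VP -> in_box #|F| VQ ->
  let q := #|F| in
  let NP := Nmax F VP in
  let NQ := Nmax F VQ in
  let dP := delta F VP in
  let dQ := delta F VQ in
  Nmax F (join_pts VP VQ) =
    maxn (maxn ((q.-1) ^ (n + m)) (NP * (q.-1) ^ m.+1))
         (maxn (NQ * (q.-1) ^ n.+1)
               (q.-1 * NP * NQ + ((q.-1) ^ n - NP) * ((q.-1) ^ m - NQ)))%N
  /\
  delta F (join_pts VP VQ) =
    Num.min (Num.min (1 - 1 / (q.-1)%:R) dP)
            (Num.min dQ (dP + dQ - dP * dQ * (q%:R / (q.-1)%:R))).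
Proof.
move=> q_ge3 VP_neq0 VQ_neq0 VP_box VQ_box /=.
have q_gt2 : (1 < #|F|.-1)%N by move: q_ge3; case: #|F| => [|[|[|k]]].
split; [exact: Nmax_join | exact: delta_join].
Qed.
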